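(* Let $k\ge1$. The class $\mathrm{Alg}(\mathbb{L}_k^{\le})$ of $\mathbb{L}_k^{\le}$-algebras coincides with the class (variety) of $\mathcal{C}_k$-algebras.
   Context: A modal pseudocomplemented De Morgan algebra ($mpM$-algebra) is an algebra $\langle A,\wedge,\vee,\sim,{}^\ast,0,1\rangle$ such that $\langle A,\wedge,\vee,\sim,0,1\rangle$ is a De Morgan algebra (bounded distributive lattice with $\sim\sim x=x$, $\sim(x\vee y)=\sim x\wedge\sim y$), $x^\ast$ is the pseudocomplement of $x$, and $x\vee\sim x\le x\vee x^\ast$. A $\mathcal{C}_k$-algebra ($k\ge1$) is a pair $(A,t)$ with $A$ an $mpM$-algebra and $t$ an $mpM$-automorphism of $A$ with $t^k=\mathrm{id}$. $Fm$ is the set of formulas built from a denumerable set of variables with connectives $\wedge,\vee$ (binary), $\sim,{}^\ast,t$ (unary), $\top,\bot$ (constants); a valuation into a $\mathcal{C}_k$-algebra $(A,t)$ is a homomorphism $v:Fm\to(A,t)$ (with $v(\top)=1$, $v(\bot)=0$). The degree-preserving logic $\mathbb{L}_k^{\le}=\langle Fm,\models_k^{\le}\rangle$: for nonempty finite $\{\alpha_1,\dots,\alpha_n\}$, $\alpha_1,\dots,\alpha_n\models_k^{\le}\alpha$ iff for every $\mathcal{C}_k$-algebra $(A,t)$, every valuation $v$ and every $a\in A$, if $v(\alpha_i)\ge a$ for all $i$ then $v(\alpha)\ge a$; $\emptyset\models_k^{\le}\alpha$ iff $v(\alpha)=1$ for all $(A,t)$ and $v$; for infinite $\Gamma$, $\Gamma\models_k^{\le}\alpha$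 iff some finite nonempty subset of $\Gamma$ entails $\alpha$. For a logic $L$ over $Fm$: a generalized matrix $\langle\mathbf{A},\mathcal{C}\rangle$ ($\mathcal{C}$ a closure system on $A$) is a generalized model of $L$ if every member of $\mathcal{C}$ is closed under $L$ for all valuations; its Tarski congruence is $\bigcap_{F\in\mathcal{C}}\boldsymbol{\Omega}_{\mathbf A}F$, where $\boldsymbol{\Omega}_{\mathbf A}F$ (Leibniz congruence) is the largest congruence of $\mathbf A$ compatible with $F$ ($(a,b)\in\theta$ and $a\in F$ imply $b\in F$). $\mathrm{Alg}(L)$ is the class of algebras $\mathbf A$ having a generalized model $\langle\mathbf A,\mathcal C\rangle$ of $L$ whose Tarski congruence is the identity. *)

From Stdlib Require Import List.
Import ListNotations.

Record sig_alg := SigAlg {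
  carrier :> Type;
  meet : carrier -> carrier -> carrier;
  join : carrier -> carrier -> carrier;
  dneg : carrier -> carrier;
  pstar : carrier -> carrier;
  top_op : carrier -> carrier;
  one : carrier;
  zero : carrier
}.

Arguments meet {s}. Arguments join {s}. Arguments dneg {s}.
Arguments pstar {s}. Arguments top_op {s}. Arguments one {s}. Arguments zero {s}.

Definition alg_le {A : sig_alg} (x y : A) : Prop := meet x y = x.

Definition is_DeMorgan (A : sig_alg) : Prop :=
  (forall x y z : A, meet x (meet y z) = meet (meet x y) z) /\
  (forall x y z : A, join x (join y z) = join (join x y) z) /\
  (forall x y : A, meet x y = meet y x) /\
  (forall x y : A, join x y = join y x) /\
  (forall x y : A, meet x (join x y) = x) /\
  (forall x y : A, join x (meet x y) = x) /\
  (forall x y z : A, meet x (join y z) = join (meet x y) (meet x z)) /\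
  (forall x : A, join x zero = x) /\
  (forall x : A, meet x one = x) /\
  (forall x : A, dneg (dneg x) = x) /\
  (forall x y : A, dneg (join x y) = meet (dneg x) (dneg y)).

Definition is_pseudocomplement (A : sig_alg) : Prop :=
  forall x y : A, meet x y = zero <-> alg_le y (pstar x).

Definition is_mpM (A : sig_alg) : Prop :=
  is_DeMorgan A /\ is_pseudocomplement A /\
  (forall x : A, alg_le (join x (dneg x)) (join x (pstar x))).

Fixpoint iter_fun {X : Type} (n : nat) (f : X -> X) (x : X) : X :=
  match n with O => x | S m => f (iter_fun m f x) end.

Definition is_Ck (k : nat) (A : sig_alg) : Prop :=
  is_mpM A /\
  (forall x y : A, top_op x = top_op y -> x = y) /\
  (forall y : A, exists x : A, top_op x = y) /\
  (forall x y : A, top_op (meet x y) = meet (top_op x) (top_op y)) /\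
  (forall x y : A, top_op (join x y) = join (top_op x) (top_op y)) /\
  (forall x : A, top_op (dneg x) = dneg (top_op x)) /\
  (forall x : A, top_op (pstar x) = pstar (top_op x)) /\
  top_op (@one A) = one /\
  top_op (@zero A) = zero /\
  (forall x : A, iter_fun k top_op x = x).

Inductive Fm : Type :=
| FVar : nat -> Fm
| FAnd : Fm -> Fm -> Fm
| FOr : Fm -> Fm -> Fm
| FNeg : Fm -> Fm
| FStar : Fm -> Fm
| FT : Fm -> Fm
| FTop : Fm
| FBot : Fm.

Fixpoint eval {A : sig_alg} (h : nat -> A) (f : Fm) : A :=
  match f with
  | FVar n => h n
  | FAnd a b => meet (eval h a) (eval h b)
  | FOr a b => join (eval h a) (eval h b)
  | FNeg a => dneg (eval h a)
  | FStar a => pstar (eval h a)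
  | FT a => top_op (eval h a)
  | FTop => one
  | FBot => zero
  end.

Definition taut_k (k : nat) (a : Fm) : Prop :=
  forall (A : sig_alg), is_Ck k A -> forall h : nat -> A, eval h a = one.

Definition deg_entails_k (k : nat) (l : list Fm) (a : Fm) : Prop :=
  forall (A : sig_alg), is_Ck k A -> forall (h : nat -> A) (c : A),
    (forall b, In b l -> alg_le c (eval h b)) -> alg_le c (eval h a).

Definition conseq_k (k : nat) (G : Fm -> Prop) (a : Fm) : Prop :=
  ((forall b, ~ G b) /\ taut_k k a) \/
  (exists l : list Fm, l <> [] /\ (forall b, In b l -> G b) /\ deg_entails_k k l a).

Definition closure_system {A : sig_alg} (C : (A -> Prop) -> Prop) : Prop :=
  forall S : (A -> Prop) -> Prop, (forall F, S F -> C F) ->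
    C (fun x => forall F, S F -> F x).

Definition is_filter_k (k : nat) {A : sig_alg} (F : A -> Prop) : Prop :=
  forall (G : Fm -> Prop) (a : Fm), conseq_k k G a ->
    forall h : nat -> A, (forall b, G b -> F (eval h b)) -> F (eval h a).

Definition generalized_model_k (k : nat) {A : sig_alg} (C : (A -> Prop) -> Prop) : Prop :=
  closure_system C /\ forall F, C F -> is_filter_k k F.

Definition is_congruence {A : sig_alg} (th : A -> A -> Prop) : Prop :=
  (forall x, th x x) /\ (forall x y, th x y -> th y x) /\
  (forall x y z, th x y -> th y z -> th x z) /\
  (forall x x' y y', th x x' -> th y y' -> th (meet x y) (meet x' y')) /\
  (forall x x' y y', th x x' -> th y y' -> th (join x y) (join x' y')) /\
  (forall x x', th x x' -> th (dneg x) (dneg x')) /\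
  (forall x x', th x x' -> th (pstar x) (pstar x')) /\
  (forall x x', th x x' -> th (top_op x) (top_op x')).

Definition compatible {A : sig_alg} (th : A -> A -> Prop) (F : A -> Prop) : Prop :=
  forall x y, th x y -> F x -> F y.

Definition leibniz {A : sig_alg} (F : A -> Prop) (a b : A) : Prop :=
  exists th : A -> A -> Prop,
    is_congruence th /\ compatible th F /\
    (forall th', is_congruence th' -> compatible th' F -> forall x y, th' x y -> th x y) /\
    th a b.

Definition tarski {A : sig_alg} (C : (A -> Prop) -> Prop) (a b : A) : Prop :=
  forall F, C F -> leibniz F a b.

Definition in_Alg_k (k : nat) (A : sig_alg) : Prop :=
  exists C : (A -> Prop) -> Prop,
    generalized_model_k k C /\ (forall a b, tarski C a b -> a = b).

(* (=>) Let A carry a generalized model of L_k^<= with trivial Tarski congruence.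
   Two elements are identified by a Leibniz congruence Omega_A F as soon as no
   unary polynomial (a formula with a distinguished variable) separates them
   with respect to F.  If a = b is an equation valid in all C_k-algebras, the
   one-premise rule phi(a) |- phi(b) belongs to L_k^<=, so every L_k^<=-filter
   is blind to the difference between the values of a and b; hence A satisfies
   every valid equation.  The C_k-axioms are all consequences of such
   equations: the lattice and De Morgan laws, the equational description of
   pseudocomplementation, the modal law, the homomorphism laws for t, and
   t^k = id, which with k >= 1 also makes t bijective.

   (<=) In a C_k-algebra the lattice filters are closed under L_k^<= (a
   degree-preserving consequence passes from the meet of the premises to the
   conclusion) and form a closure system; principal filters separate points,
   so the Tarski congruence of this generalized model is the identity. *)

From Stdlib Require Import List PeanoNat Lia.
Import ListNotations.

Fixpoint subst (s : nat -> Fm) (f : Fm) : Fm :=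
  match f with
  | FVar n => s n
  | FAnd a b => FAnd (subst s a) (subst s b)
  | FOr a b => FOr (subst s a) (subst s b)
  | FNeg a => FNeg (subst s a)
  | FStar a => FStar (subst s a)
  | FT a => FT (subst s a)
  | FTop => FTop
  | FBot => FBot
  end.

Lemma eval_ext (A : sig_alg) (h g : nat -> A) (f : Fm) :
  (forall n, h n = g n) -> eval h f = eval g f.
Proof. intros H; induction f; simpl; congruence. Qed.

Lemma eval_subst (A : sig_alg) (h : nat -> A) (s : nat -> Fm) (f : Fm) :
  eval h (subst s f) = eval (fun n => eval h (s n)) f.
Proof. induction f; simpl; congruence. Qed.

Definition upd {X : Type} (h : nat -> X) (x : X) : nat -> X :=
  fun n => match n with 0 => x | S m => h m end.

(** * Leibniz congruence and unary polynomials *)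

Section Leibniz.
Variable A : sig_alg.
Variable F : A -> Prop.

Definition indist (a b : A) : Prop :=
  forall (f : Fm) (h : nat -> A), F (eval (upd h a) f) <-> F (eval (upd h b) f).

(** Indistinguishability is preserved by every unary polynomial with one
    parameter [y]; this covers the fundamental operations in each argument. *)
Lemma indist_poly (c : Fm) (y x x' : A) :
  indist x x' -> indist (eval (upd (fun _ => y) x) c) (eval (upd (fun _ => y) x') c).
Proof.
  intros Hx f h.
  set (c' := subst (fun n => match n with 0 => FVar 0 | S _ => FVar 1 end) c).
  set (s := fun n => match n with 0 => c' | S m => FVar (S (S m)) end).
  assert (Hplug : forall z, eval (upd (upd h y) z) (subst s f)
                            = eval (upd h (eval (upd (fun _ => y) z) c)) f).
  { intros z. rewrite eval_subst. apply eval_ext. intros [|m]; [|reflexivity].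
    simpl. unfold c'. rewrite eval_subst. apply eval_ext. now intros [|]. }
  rewrite <- !Hplug. apply Hx.
Qed.

Lemma indist_trans (a b c : A) : indist a b -> indist b c -> indist a c.
Proof. intros H1 H2 f h. rewrite (H1 f h). apply H2. Qed.

Lemma indist_congruence : is_congruence indist.
Proof.
  split; [intros x f h; tauto|].
  split; [intros x y H f h; rewrite (H f h); tauto|].
  split; [exact indist_trans|].
  split; [|split; [|split; [|split]]].
  - intros x x' y y' Hx Hy. apply (indist_trans _ (meet x' y)).
    + exact (indist_poly (FAnd (FVar 0) (FVar 1)) y x x' Hx).
    + exact (indist_poly (FAnd (FVar 1) (FVar 0)) x' y y' Hy).
  - intros x x' y y' Hx Hy. apply (indist_trans _ (join x' y)).
    + exact (indist_poly (FOr (FVar 0) (FVar 1)) y x x' Hx).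
    + exact (indist_poly (FOr (FVar 1) (FVar 0)) x' y y' Hy).
  - intros x x' H. exact (indist_poly (FNeg (FVar 0)) x x x' H).
  - intros x x' H. exact (indist_poly (FStar (FVar 0)) x x x' H).
  - intros x x' H. exact (indist_poly (FT (FVar 0)) x x x' H).
Qed.

Lemma congruence_eval (th : A -> A -> Prop) (a b : A) (h : nat -> A) (f : Fm) :
  is_congruence th -> th a b -> th (eval (upd h a) f) (eval (upd h b) f).
Proof.
  intros (Hr & _ & _ & Hm & Hj & Hn & Hp & Ht) Hab.
  induction f; simpl; auto. destruct n; simpl; auto.
Qed.

(** Indistinguishable elements are identified by the Leibniz congruence:
    [indist] is itself the largest congruence compatible with [F]. *)
Lemma indist_leibniz (a b : A) : indist a b -> leibniz F a b.
Proof.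
  intros Hab. exists indist. split; [apply indist_congruence|]. split.
  - intros x y Hxy Fx. exact (proj1 (Hxy (FVar 0) (fun _ => x)) Fx).
  - split; [|exact Hab].
    intros th Hth Hcomp x y Hxy f h.
    pose proof (congruence_eval th x y h f Hth Hxy) as Hf.
    destruct Hth as (_ & Hs & _).
    split; apply Hcomp; auto.
Qed.

Lemma leibniz_iff (a b : A) : leibniz F a b -> (F a <-> F b).
Proof.
  intros (th & (_ & Hs & _) & Hcomp & _ & Hab).
  split; apply Hcomp; auto.
Qed.

End Leibniz.

(** * Algebras in Alg(L_k^<=) satisfy the equations valid in C_k-algebras *)

Definition valid_eq (k : nat) (a b : Fm) : Prop :=
  forall B : sig_alg, is_Ck k B -> forall v : nat -> B, eval v a = eval v b.

Lemma valid_eq_sym (k : nat) (a b : Fm) : valid_eq k a b -> valid_eq k b a.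
Proof. intros H B HB v. symmetry. apply H, HB. Qed.

Definition interleave {X : Type} (h h' : nat -> X) (n : nat) : X :=
  if Nat.odd n then h' (Nat.div2 n) else h (Nat.div2 n).

(** [subst (plug a) f] puts [a], renamed apart onto the even variables, in
    the place of variable 0 of [f], whose other variables become odd. *)
Definition plug (a : Fm) (n : nat) : Fm :=
  match n with
  | 0 => subst (fun m => FVar (2 * m)) a
  | S m => FVar (2 * m + 1)
  end.

Lemma eval_plug (A : sig_alg) (h h' : nat -> A) (a f : Fm) :
  eval (interleave h h') (subst (plug a) f) = eval (upd h' (eval h a)) f.
Proof.
  rewrite eval_subst. apply eval_ext. intros [|m]; cbn [plug upd].
  - rewrite eval_subst. apply eval_ext. intros n. cbn [eval]. unfold interleave.
    rewrite Nat.odd_even, Nat.div2_even. reflexivity.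
  - cbn [eval]. unfold interleave. rewrite Nat.odd_odd, Nat.div2_odd'. reflexivity.
Qed.

Lemma valid_eq_plug (k : nat) (a b f : Fm) :
  valid_eq k a b -> valid_eq k (subst (plug a) f) (subst (plug b) f).
Proof.
  intros Hab B HB v. rewrite !eval_subst. apply eval_ext.
  intros [|m]; simpl; [rewrite !eval_subst; apply Hab, HB | reflexivity].
Qed.

(** The rule [a |- b] belongs to L_k^<= for a valid equation [a = b], so
    every L_k^<=-filter is closed under it. *)
Lemma filter_valid_eq (k : nat) (A : sig_alg) (F : A -> Prop) (a b : Fm) (g : nat -> A) :
  is_filter_k k F -> valid_eq k a b -> F (eval g a) -> F (eval g b).
Proof.
  intros HF Hab Ha. apply (HF (fun x => x = a)).
  - right. exists [a]. split; [discriminate|]. split; [intros x [Hx|[]]; auto|].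
    intros B HB v c Hc. rewrite <- (Hab B HB v). apply Hc. now left.
  - now intros x ->.
Qed.

(** Hence an algebra of Alg(L_k^<=) satisfies every valid equation: the two
    sides are indistinguishable for each filter of the generalized model. *)
Lemma Alg_valid_eq (k : nat) (A : sig_alg) :
  in_Alg_k k A -> forall a b, valid_eq k a b -> forall h : nat -> A, eval h a = eval h b.
Proof.
  intros (C & (_ & HF) & Hid) a b Hab h. apply Hid. intros F HCF.
  apply indist_leibniz. intros f h'. rewrite <- !(eval_plug A h h').
  split; apply (filter_valid_eq k A F); auto using valid_eq_plug, valid_eq_sym.
Qed.

Section DeMorganLattice.
Variable B : sig_alg.
Hypothesis HD : is_DeMorgan B.

Lemma le_refl (a : B) : alg_le a a.
Proof.
  destruct HD as (_ & _ & _ & _ & abs1 & abs2 & _).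
  unfold alg_le. rewrite <- (abs2 a a) at 2. apply abs1.
Qed.

Lemma le_antisym (a b : B) : alg_le a b -> alg_le b a -> a = b.
Proof.
  destruct HD as (_ & _ & mC & _). unfold alg_le. intros H1 H2.
  rewrite <- H1, mC. exact H2.
Qed.

Lemma le_trans (a b c : B) : alg_le a b -> alg_le b c -> alg_le a c.
Proof.
  destruct HD as (mA & _). unfold alg_le. intros H1 H2.
  rewrite <- H1, <- mA, H2. reflexivity.
Qed.

Lemma meet_le_l (a b : B) : alg_le (meet a b) a.
Proof.
  pose proof (le_refl a) as Ha. destruct HD as (mA & _ & mC & _).
  unfold alg_le in *. rewrite mC, mA, Ha. reflexivity.
Qed.

Lemma meet_le_r (a b : B) : alg_le (meet a b) b.
Proof. destruct HD as (_ & _ & mC & _). rewrite mC. apply meet_le_l. Qed.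

Lemma le_meet (z a b : B) : alg_le z (meet a b) <-> alg_le z a /\ alg_le z b.
Proof.
  split.
  - intros H. split; eapply le_trans; eauto using meet_le_l, meet_le_r.
  - destruct HD as (mA & _). unfold alg_le. intros [H1 H2]. rewrite mA, H1, H2. reflexivity.
Qed.

Lemma meet_zero_l (a : B) : meet zero a = zero.
Proof.
  destruct HD as (_ & _ & _ & jC & abs1 & _ & _ & j0 & _).
  rewrite <- (j0 a) at 1. rewrite jC. apply abs1.
Qed.

(** Equational description of pseudocomplementation: [x^*] is the
    pseudocomplement of [x] iff [x ∧ x^* = 0], [y ∧ x^* = y ∧ (x ∧ y)^*]
    and [0^* = 1]. *)
Lemma pc_of_equations :
  (forall x : B, meet x (pstar x) = zero) ->
  (forall x y : B, meet y (pstar x) = meet y (pstar (meet x y))) ->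
  pstar (@zero B) = one ->
  is_pseudocomplement B.
Proof.
  intros E1 E2 E3 x y. pose proof HD as (mA & _ & mC & _ & _ & _ & _ & _ & m1 & _).
  unfold alg_le. split.
  - intros Hxy. rewrite E2, Hxy, E3. apply m1.
  - intros Hy. rewrite <- Hy, (mC y), mA, E1. apply meet_zero_l.
Qed.

Section Pseudocomplement.
Hypothesis Hps : is_pseudocomplement B.

Lemma pc_meet_self (x : B) : meet x (pstar x) = zero.
Proof. apply Hps, le_refl. Qed.

Lemma pc_zero : pstar (@zero B) = one.
Proof.
  apply le_antisym.
  - destruct HD as (_ & _ & _ & _ & _ & _ & _ & _ & m1 & _). exact (m1 _).
  - apply Hps, meet_zero_l.
Qed.

Lemma pc_meet_relative (x y : B) : meet y (pstar x) = meet y (pstar (meet x y)).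
Proof.
  assert (Hdown : forall z, alg_le z y -> meet x z = meet (meet x y) z).
  { pose proof HD as (mA & _). unfold alg_le. intros z Hz. rewrite <- mA.
    destruct HD as (_ & _ & mC & _). rewrite (mC y z), Hz. reflexivity. }
  apply le_antisym; apply le_meet; (split; [apply meet_le_l|]); apply Hps.
  - rewrite <- Hdown by apply meet_le_l. apply Hps, meet_le_r.
  - rewrite Hdown by apply meet_le_l. apply Hps, meet_le_r.
Qed.

End Pseudocomplement.
End DeMorganLattice.

Lemma iter_fun_S {X : Type} (m : nat) (f : X -> X) (x : X) :
  iter_fun (S m) f x = iter_fun m f (f x).
Proof. induction m; simpl in *; congruence. Qed.

Lemma periodic_bijective {X : Type} (f : X -> X) (k : nat) :
  1 <= k -> (forall x, iter_fun k f x = x) ->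
  (forall x y, f x = f y -> x = y) /\ (forall y, exists x, f x = y).
Proof.
  intros Hk Hit. destruct k as [|m]; [lia|]. split.
  - intros x y H. rewrite <- (Hit x), <- (Hit y), !iter_fun_S, H. reflexivity.
  - intros y. exists (iter_fun m f y). exact (Hit y).
Qed.

Fixpoint fiter (n : nat) (f : Fm) : Fm :=
  match n with 0 => f | S m => FT (fiter m f) end.

Lemma eval_fiter (A : sig_alg) (h : nat -> A) (n : nat) (f : Fm) :
  eval h (fiter n f) = iter_fun n top_op (eval h f).
Proof. induction n; simpl; congruence. Qed.

(** Reification of a term of a [sig_alg] into a formula: the atoms (maximal
    subterms not built by an operation) are collected in a list [env] and
    replaced by the variable of their position, so that the term is the value
    of the formula under [fun n => nth n env _]. *)
Ltac atom_index t env :=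
  lazymatch env with
  | cons t _ => constr:(0)
  | cons _ ?r => let n := atom_index t r in constr:(S n)
  end.

Ltac atom_mem t env :=
  lazymatch env with
  | nil => constr:(false)
  | cons t _ => constr:(true)
  | cons _ ?r => atom_mem t r
  end.

Ltac add_atoms env t :=
  lazymatch t with
  | meet ?a ?b => let e := add_atoms env a in add_atoms e b
  | join ?a ?b => let e := add_atoms env a in add_atoms e b
  | dneg ?a => add_atoms env a
  | pstar ?a => add_atoms env a
  | top_op ?a => add_atoms env a
  | one => env
  | zero => env
  | _ => let found := atom_mem t env in
         lazymatch found with
         | true => env
         | false => constr:(cons t env)
         end
  end.

Ltac reify env t :=
  lazymatch t with
  | meet ?a ?b => let ra := reify env a in let rb := reify env b in constr:(FAnd ra rb)
  | join ?a ?b => let ra := reify env a in let rb := reify env b in constr:(FOr ra rb)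
  | dneg ?a => let ra := reify env a in constr:(FNeg ra)
  | pstar ?a => let ra := reify env a in constr:(FStar ra)
  | top_op ?a => let ra := reify env a in constr:(FT ra)
  | one => constr:(FTop)
  | zero => constr:(FBot)
  | _ => let n := atom_index t env in constr:(FVar n)
  end.

(** Proves an identity [l = r] in an algebra satisfying, by [Hsat], every
    equation valid in C_k-algebras; the tactic [valid] proves the reified
    identity in an arbitrary C_k-algebra, given the proof of [is_Ck]. *)
Ltac transfer_identity Hsat valid :=
  lazymatch goal with
  | |- ?l = ?r =>
    let T := type of l in
    let e := add_atoms (@nil T) l in
    let e := add_atoms e r in
    let fl := reify e l in
    let fr := reify e r in
    change (eval (fun n => nth n e l) fl = eval (fun n => nth n e l) fr);
    apply Hsat;
    let B := fresh "B" in let HB := fresh "HB" in let v := fresh "v" in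
    intros B HB v; cbn [eval]; valid HB
  end.

Ltac Ck_axiom HB :=
  destruct HB as [((? & ? & ? & ? & ? & ? & ? & ? & ? & ? & ?) & ? & ?)
                  (? & ? & ? & ? & ? & ? & ? & ? & ?)];
  auto.

(** * Every algebra satisfying the valid equations is a C_k-algebra *)

Section EquationalClass.
Variable k : nat.
Variable A : sig_alg.
Hypothesis Hsat : forall a b, valid_eq k a b -> forall h : nat -> A, eval h a = eval h b.

Lemma sat_DeMorgan : is_DeMorgan A.
Proof. repeat split; intros; transfer_identity Hsat Ck_axiom. Qed.

Lemma sat_pseudocomplement : is_pseudocomplement A.
Proof.
  apply (pc_of_equations A sat_DeMorgan); intros;
    transfer_identity Hsat ltac:(fun HB => destruct HB as [(HD & Hps & _) _];
                                           auto using pc_meet_self, pc_meet_relative, pc_zero).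
Qed.

Lemma sat_mpM : is_mpM A.
Proof.
  split; [exact sat_DeMorgan|]. split; [exact sat_pseudocomplement|].
  intros x. unfold alg_le.
  transfer_identity Hsat ltac:(fun HB => destruct HB as [(_ & _ & Hmodal) _]; apply Hmodal).
Qed.

Lemma sat_periodic (x : A) : iter_fun k top_op x = x.
Proof.
  change (iter_fun k top_op (eval (fun _ => x) (FVar 0)) = eval (fun _ => x) (FVar 0)).
  rewrite <- eval_fiter. apply Hsat.
  intros B HB v. rewrite eval_fiter. destruct HB as [_ (_ & _ & _ & _ & _ & _ & _ & _ & Hit)].
  apply Hit.
Qed.

Lemma Ck_of_sat : 1 <= k -> is_Ck k A.
Proof.
  intros Hk. destruct (periodic_bijective top_op k Hk sat_periodic) as [Hinj Hsur].
  refine (conj sat_mpM (conj Hinj (conj Hsur _))).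
  repeat split; [intros; transfer_identity Hsat Ck_axiom .. | exact sat_periodic].
Qed.

End EquationalClass.

(** * C_k-algebras belong to Alg(L_k^<=) *)

Definition lattice_filter {A : sig_alg} (F : A -> Prop) : Prop :=
  F one /\ (forall x y, F x -> alg_le x y -> F y) /\ (forall x y, F x -> F y -> F (meet x y)).

Lemma lattice_filters_closure_system (A : sig_alg) : closure_system (@lattice_filter A).
Proof.
  intros S HS. split; [|split].
  - intros F HF. apply (HS F HF).
  - intros x y Hx Hxy F HF. destruct (HS F HF) as (_ & Hup & _). apply Hup with x; [apply Hx | ]; assumption.
  - intros x y Hx Hy F HF. destruct (HS F HF) as (_ & _ & Hmeet). apply Hmeet; [apply Hx | apply Hy]; assumption.
Qed.

Section LatticeFilters.
Variable A : sig_alg.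
Hypothesis HD : is_DeMorgan A.

Definition meet_all (h : nat -> A) (l : list Fm) : A :=
  fold_right (fun b acc => meet (eval h b) acc) one l.

Lemma meet_all_le (h : nat -> A) (l : list Fm) (b : Fm) :
  In b l -> alg_le (meet_all h l) (eval h b).
Proof.
  induction l as [|b' l IH]; [intros []|]. intros [<- | Hb]; simpl.
  - apply meet_le_l, HD.
  - eapply le_trans; [exact HD | apply meet_le_r, HD | auto].
Qed.

Lemma lattice_filter_meet_all (F : A -> Prop) (h : nat -> A) (l : list Fm) :
  lattice_filter F -> (forall b, In b l -> F (eval h b)) -> F (meet_all h l).
Proof.
  intros (F1 & _ & Fmeet) Hl. induction l as [|b l IH]; simpl; auto.
  apply Fmeet; [apply Hl; now left | apply IH; intros; apply Hl; now right].
Qed.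

Lemma principal_lattice_filter (a : A) : lattice_filter (fun x => alg_le a x).
Proof.
  split; [|split].
  - destruct HD as (_ & _ & _ & _ & _ & _ & _ & _ & m1 & _). apply m1.
  - intros x y Hx Hxy. eapply le_trans; eauto.
  - intros x y Hx Hy. apply le_meet; auto.
Qed.

(** Principal filters separate points, so the Tarski congruence of the
    lattice filters is the identity. *)
Lemma lattice_filters_reduced (a b : A) : tarski (@lattice_filter A) a b -> a = b.
Proof.
  intros Hab.
  assert (Hsep : forall c, alg_le c a <-> alg_le c b).
  { intros c. exact (leibniz_iff A _ a b (Hab _ (principal_lattice_filter c))). }
  apply le_antisym; [exact HD | apply Hsep, le_refl, HD | apply Hsep, le_refl, HD].
Qed.

End LatticeFilters.

(** In a C_k-algebra, lattice filters are closed under L_k^<=: the meet of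
    the premises of a rule lies in the filter and below its conclusion. *)
Lemma lattice_filter_closed (k : nat) (A : sig_alg) (F : A -> Prop) :
  is_Ck k A -> lattice_filter F -> is_filter_k k F.
Proof.
  intros HA HF G a [[_ Htaut] | (l & _ & HlG & Hent)] h HG.
  - rewrite (Htaut A HA h). apply HF.
  - assert (HD : is_DeMorgan A) by apply HA.
    destruct HF as (F1 & Fup & Fmeet). apply Fup with (meet_all A h l).
    + apply lattice_filter_meet_all; [split; auto | auto].
    + apply Hent; [exact HA|]. intros b Hb. now apply meet_all_le.
Qed.

Lemma Ck_in_Alg (k : nat) (A : sig_alg) : is_Ck k A -> in_Alg_k k A.
Proof.
  intros HA. exists (@lattice_filter A). split; [split|].
  - apply lattice_filters_closure_system.
  - intros F HF. exact (lattice_filter_closed k A F HA HF).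
  - apply lattice_filters_reduced, HA.
Qed.

Theorem proposition6p9 (k : nat) (hk : 1 <= k) (A : sig_alg) :
  in_Alg_k k A <-> is_Ck k A.
Proof.
  split.
  - intros Halg. exact (Ck_of_sat k A (Alg_valid_eq k A Halg) hk).
  - apply Ck_in_Alg.
Qed.
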